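(* Let $\rho$ be a probability density on $\mathbb{R}$ supported on $[\alpha,\beta]$ with $0\le\alpha<\beta<\infty$, continuous and bounded on $[\alpha,\beta]$. Fix $\lambda\in(\alpha,\beta)$ with $\rho(\lambda)>0$ and assume $\rho$ is continuously differentiable on a neighborhood of $\lambda$. For each $p$ in an unbounded sequence of positive integers, let $0<\lambda^{(p)}_1<\lambda^{(p)}_2<\cdots<\lambda^{(p)}_p$ be simple eigenvalues, and let $i=i(p)$ be an index with $2\le i\le p-1$ and $\lambda^{(p)}_{i}=\lambda$. Write $s_i^{-}=\lambda_i^{(p)}-\lambda^{(p)}_{i-1}$, $s_i^{+}=\lambda^{(p)}_{i+1}-\lambda_i^{(p)}$, and $f_\lambda(x)=\lambda x/(\lambda-x)^2$. Assume: (i) there are constants $0<a<b$ such that $a\le p\,s_i^{\pm}\le b$ for all $p$; (ii) $\frac1p\sum_{j=1}^{i-2} f_\lambda(\lambda^{(p)}_j)-\int_\alpha^{\lambda-s_i^-}f_\lambda(x)\rho(x)\,dx=o(p)$ and $\frac1p\sum_{j=i+2}^{p} f_\lambda(\lambda^{(p)}_j)-\int_{\lambda+s_i^+}^{\beta}f_\lambda(x)\rho(x)\,dx=o(p)$ as $p\to\infty$. Let $h_i=\sum_{j\ne i}\frac{\lambda_i\lambda_j}{(\lambda_i-\lambda_j)^2}$ and $$\hat h_i=\lambda^2\left[\frac{1}{(s_i^-)^2}+\frac{1}{(s_i^+)^2}+p\rho(\lambda)\left(\frac1{s_i^-}+\frac1{s_i^+}\right)\right].$$ Then $h_i-\hat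 h_i=o(p^2)$ while $\hat h_i$ is of exact order $p^2$; in particular $h_i/\hat h_i\to1$ as $p\to\infty$.
   Context: This is the paper's large-$p$ approximation of the quantity $h_i$ appearing in the asymptotic expected eigenvector error $\mathbb{E}[n\|\bm u_i-\tilde{\bm u}_i\|^2]\to h_i$ for Wishart sample covariance matrices. Hypothesis (i) encodes that nearest-neighbour eigenvalue gaps are of order $1/(p\rho(\lambda))$; hypothesis (ii) encodes that the empirical spectral density converges to $\rho$ fast enough near $\lambda$. *)

From Stdlib Require Import Reals Lra Lia List.
Open Scope R_scope.

(* sumR m n f = f m + f (m+1) + ... + f n  (empty sum = 0 when n < m) *)
Definition sumR (m n : nat) (f : nat -> R) : R :=
  fold_right Rplus 0 (map f (seq m (S n - m))).

Definition f_lam (lam x : R) : R := lam * x / (lam - x) ^ 2.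

Definition h_i (p i : nat) (ev : nat -> R) : R :=
  sumR 1 p (fun j => if Nat.eq_dec j i then 0
                     else ev i * ev j / (ev i - ev j) ^ 2).

Definition hhat_i (p : nat) (lam rho_lam sm sp : R) : R :=
  lam ^ 2 * (1 / sm ^ 2 + 1 / sp ^ 2 + INR p * rho_lam * (1 / sm + 1 / sp)).

(* Splitting off the two nearest neighbours, h_i equals the two far sums plus
   lam^2/s-^2 - lam/s- + lam^2/s+^2 + lam/s+, and hypothesis (ii) replaces each far sum
   by p times an integral of f_lam rho over the complement of the gap.  Near the pole,
   f_lam rho = G / (lam - x)^2 with G x = lam x rho x continuous at lam, hence
   s * int_alpha^(lam - s) f_lam rho -> G lam = lam^2 rho(lam) as s -> 0, and likewise
   on the right.  Since p s+- stays in [a, b] by (i), every error term is o(p^2), while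
   hhat_i is squeezed between two constant multiples of p^2. *)

From Stdlib Require Import Reals List Lra Lia.
From Coquelicot Require Import Coquelicot.
Open Scope R_scope.

Lemma fold_right_Rplus_app (l1 l2 : list R) :
  fold_right Rplus 0 (l1 ++ l2) = fold_right Rplus 0 l1 + fold_right Rplus 0 l2.
Proof. induction l1 as [|x l IH]; simpl; [ring | rewrite IH; ring]. Qed.

Lemma sumR_split (m k n : nat) (f : nat -> R) : (m <= S k)%nat -> (k <= n)%nat ->
  sumR m n f = sumR m k f + sumR (S k) n f.
Proof.
intros Hmk Hkn. unfold sumR.
replace (S n - m)%nat with ((S k - m) + (S n - S k))%nat by lia.
rewrite seq_app, map_app, fold_right_Rplus_app.
now replace (m + (S k - m))%nat with (S k) by lia.
Qed.

Lemma sumR_single (k : nat) (f : nat -> R) : sumR k k f = f k.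
Proof. unfold sumR. replace (S k - k)%nat with 1%nat by lia. simpl. ring. Qed.

Lemma sumR_ext (m n : nat) (f g : nat -> R) :
  (forall j, (m <= j <= n)%nat -> f j = g j) -> sumR m n f = sumR m n g.
Proof.
intros Hfg. unfold sumR. f_equal. apply map_ext_in.
intros j Hj. apply in_seq in Hj. apply Hfg. lia.
Qed.

Lemma h_i_decomposition (p i : nat) (ev : nat -> R) : (2 <= i)%nat -> (i < p)%nat ->
  h_i p i ev = sumR 1 (i - 2) (fun j => f_lam (ev i) (ev j))
               + f_lam (ev i) (ev (pred i)) + f_lam (ev i) (ev (S i))
               + sumR (i + 2) p (fun j => f_lam (ev i) (ev j)).
Proof.
intros H2i Hip. unfold h_i.
rewrite (sumR_split 1 (i - 2) p), (sumR_split (S (i - 2)) (pred i) p),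
  (sumR_split (S (pred i)) i p), (sumR_split (S i) (S i) p) by lia.
replace (S (i - 2)) with (pred i) by lia. replace (S (pred i)) with i by lia.
replace (S (S i)) with (i + 2)%nat by lia.
rewrite !sumR_single.
destruct (Nat.eq_dec (pred i) i); [lia|]. destruct (Nat.eq_dec i i); [|congruence].
destruct (Nat.eq_dec (S i) i); [lia|].
rewrite (sumR_ext 1 (i - 2) _ (fun j => f_lam (ev i) (ev j))),
  (sumR_ext (i + 2) p _ (fun j => f_lam (ev i) (ev j))).
- unfold f_lam. ring.
- intros j Hj. destruct (Nat.eq_dec j i); [lia | reflexivity].
- intros j Hj. destruct (Nat.eq_dec j i); [lia | reflexivity].
Qed.

Lemma hhat_i_error (p : nat) (lam r sm sp SL SR IL IR : R) :
  (0 < p)%nat -> 0 < sm -> 0 < sp ->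
  (SL + f_lam lam (lam - sm) + f_lam lam (lam + sp) + SR - hhat_i p lam r sm sp) / INR p ^ 2
  = (/ INR p * SL - IL) / INR p + (/ INR p * SR - IR) / INR p
    + (sm * IL - lam ^ 2 * r) * / (sm * INR p) + (sp * IR - lam ^ 2 * r) * / (sp * INR p)
    + lam / INR p * / (sp * INR p) - lam / INR p * / (sm * INR p).
Proof.
intros Hp Hsm Hsp. assert (HP : 0 < INR p) by now apply lt_0_INR.
unfold f_lam, hhat_i.
replace (lam - (lam - sm)) with sm by ring. replace (lam - (lam + sp)) with (- sp) by ring.
field. lra.
Qed.

Lemma hhat_i_bounds (p : nat) (lam r sm sp a b : R) :
  (0 < p)%nat -> 0 < a -> 0 <= r ->
  a <= INR p * sm <= b -> a <= INR p * sp <= b ->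
  lam ^ 2 * (2 / b ^ 2 + 2 * r / b) * INR p ^ 2 <= hhat_i p lam r sm sp
  <= lam ^ 2 * (2 / a ^ 2 + 2 * r / a) * INR p ^ 2.
Proof.
intros Hp Ha Hr Hsm Hsp. assert (HP : 0 < INR p) by now apply lt_0_INR.
assert (Hinv : forall s, a <= INR p * s <= b -> / b <= / (s * INR p) <= / a).
{ intros s Hs. rewrite Rmult_comm. split; apply Rinv_le_contravar; lra. }
destruct (Hinv sm Hsm) as [Hx1 Hx2], (Hinv sp Hsp) as [Hy1 Hy2].
assert (Hsm0 : 0 < sm) by nra. assert (Hsp0 : 0 < sp) by nra.
assert (Hb : 0 < / b) by (apply Rinv_0_lt_compat; lra).
replace (hhat_i p lam r sm sp) with
  (lam ^ 2 * INR p ^ 2 * ((/ (sm * INR p)) ^ 2 + (/ (sp * INR p)) ^ 2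
     + r * (/ (sm * INR p) + / (sp * INR p))))
  by (unfold hhat_i; field; lra).
assert (HL : 0 <= lam ^ 2 * INR p ^ 2) by (apply Rmult_le_pos; apply pow2_ge_0).
set (x := / (sm * INR p)) in *; set (y := / (sp * INR p)) in *.
replace (2 / b ^ 2 + 2 * r / b) with ((/ b) ^ 2 + (/ b) ^ 2 + r * (/ b + / b)) by (field; lra).
replace (2 / a ^ 2 + 2 * r / a) with ((/ a) ^ 2 + (/ a) ^ 2 + r * (/ a + / a)) by (field; lra).
assert (Hphi : (/ b) ^ 2 + (/ b) ^ 2 + r * (/ b + / b) <= x ^ 2 + y ^ 2 + r * (x + y)
                <= (/ a) ^ 2 + (/ a) ^ 2 + r * (/ a + / a)).
{ assert (Hsq : forall z, / b <= z <= / a -> (/ b) ^ 2 <= z ^ 2 <= (/ a) ^ 2)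
    by (intros z Hz; simpl; rewrite !Rmult_1_r; split; apply Rmult_le_compat; lra).
  assert (Hr1 : r * (/ b + / b) <= r * (x + y)) by (apply Rmult_le_compat_l; lra).
  assert (Hr2 : r * (x + y) <= r * (/ a + / a)) by (apply Rmult_le_compat_l; lra).
  pose proof (Hsq x (conj Hx1 Hx2)). pose proof (Hsq y (conj Hy1 Hy2)). lra. }
assert (Hscale : forall u, lam ^ 2 * u * INR p ^ 2 = lam ^ 2 * INR p ^ 2 * u) by (intro; ring).
rewrite !Hscale. split; apply Rmult_le_compat_l; solve [exact HL | apply Hphi].
Qed.

Lemma hhat_i_order (p : nat -> nat) (sm sp : nat -> R) (lam r a b : R) :
  0 < lam -> 0 < a -> 0 <= r -> (forall n, (0 < p n)%nat) ->
  (forall n, a <= INR (p n) * sm n <= b) -> (forall n, a <= INR (p n) * sp n <= b) ->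
  exists c C, 0 < c /\ 0 < C /\
    forall n, c * INR (p n) ^ 2 <= hhat_i (p n) lam r (sm n) (sp n) <= C * INR (p n) ^ 2.
Proof.
intros Hlam Ha Hr Hp Hsm Hsp.
assert (Hb : 0 < b) by (specialize (Hsm O); lra).
assert (Hpos : forall u, 0 < u -> 0 < lam ^ 2 * (2 / u ^ 2 + 2 * r / u)).
{ intros u Hu. apply Rmult_lt_0_compat; [apply pow_lt; lra|].
  apply Rplus_lt_le_0_compat; [apply Rdiv_lt_0_compat; [lra | apply pow_lt; lra]|].
  apply Rdiv_le_0_compat; lra. }
exists (lam ^ 2 * (2 / b ^ 2 + 2 * r / b)), (lam ^ 2 * (2 / a ^ 2 + 2 * r / a)).
split; [now apply Hpos|]. split; [now apply Hpos|].
intro n. now apply hhat_i_bounds.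
Qed.

Lemma is_lim_seq_mult_bounded (u v : nat -> R) (K : R) :
  is_lim_seq u 0 -> (forall n, Rabs (v n) <= K) -> is_lim_seq (fun n => u n * v n) 0.
Proof.
intros Hu Hv. apply is_lim_seq_abs_0.
apply (is_lim_seq_le_le (fun _ => 0) _ (fun n => Rabs (u n) * K)).
- intro n. split; [apply Rabs_pos|]. rewrite Rabs_mult.
  apply Rmult_le_compat_l; [apply Rabs_pos | apply Hv].
- apply is_lim_seq_const.
- apply is_lim_seq_abs_0 in Hu.
  assert (HK := is_lim_seq_mult' _ _ 0 K Hu (is_lim_seq_const K)).
  now rewrite Rmult_0_l in HK.
Qed.

Lemma is_lim_seq_inv_INR (p : nat -> nat) :
  (forall M : nat, exists N, forall n, (N <= n)%nat -> (M <= p n)%nat) ->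
  is_lim_seq (fun n => / INR (p n)) 0.
Proof.
intros Hp.
assert (Hinf : is_lim_seq (fun n => INR (p n)) p_infty).
{ apply is_lim_seq_spec. intro M. destruct (INR_unbounded M) as [K HK].
  destruct (Hp (S K)) as [N HN]. exists N. intros n Hn.
  specialize (HN n Hn). apply le_INR in HN. rewrite S_INR in HN. lra. }
exact (is_lim_seq_inv _ _ Hinf ltac:(discriminate)).
Qed.

Lemma is_lim_seq_scaled_gap (P s : nat -> R) (a b : R) :
  0 < a -> is_lim_seq (fun n => / P n) 0 -> (forall n, 0 < P n) ->
  (forall n, a <= P n * s n <= b) -> is_lim_seq s 0.
Proof.
intros Ha HP HPpos Hs.
apply (is_lim_seq_ext (fun n => / P n * (P n * s n))).
{ intro n. field. apply Rgt_not_eq, HPpos. }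
apply (is_lim_seq_mult_bounded _ _ b HP). intro n.
specialize (Hs n). rewrite Rabs_pos_eq; lra.
Qed.

Lemma is_lim_seq_div_scaled_gap (x P s : nat -> R) (a : R) :
  0 < a -> (forall n, a <= P n * s n) -> is_lim_seq x 0 ->
  is_lim_seq (fun n => x n * / (s n * P n)) 0.
Proof.
intros Ha Hs Hx. apply (is_lim_seq_mult_bounded _ _ (/ a) Hx). intro n.
specialize (Hs n). rewrite Rmult_comm, Rabs_pos_eq by (apply Rlt_le, Rinv_0_lt_compat; lra).
apply Rinv_le_contravar; lra.
Qed.

Lemma is_lim_seq_ratio_one (u v w : nat -> R) (c : R) :
  0 < c -> (forall n, 0 < w n) -> (forall n, c * w n <= v n) ->
  is_lim_seq (fun n => (u n - v n) / w n) 0 -> is_lim_seq (fun n => u n / v n) 1.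
Proof.
intros Hc Hw Hv Hu.
assert (Hvpos : forall n, 0 < v n) by (intro n; specialize (Hw n); specialize (Hv n); nra).
apply (is_lim_seq_ext (fun n => 1 + (u n - v n) / w n * (w n / v n))).
{ intro n. specialize (Hw n). specialize (Hvpos n). field. lra. }
replace (Finite 1) with (Finite (1 + 0)) by (f_equal; ring).
apply is_lim_seq_plus'; [apply is_lim_seq_const|].
apply (is_lim_seq_mult_bounded _ _ (/ c) Hu). intro n.
specialize (Hw n). specialize (Hv n). specialize (Hvpos n).
rewrite Rabs_pos_eq by (apply Rlt_le, Rdiv_lt_0_compat; lra).
apply Rle_trans with (w n * / (c * w n)).
- apply Rmult_le_compat_l; [lra|]. apply Rinv_le_contravar; [nra | exact Hv].
- right. field. lra.
Qed.

Lemma is_RInt_inv_sq (c lam u v : R) : u <= v -> (v < lam \/ lam < u) ->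
  is_RInt (fun x => c / (lam - x) ^ 2) u v (c / (lam - v) - c / (lam - u)).
Proof.
intros Huv Hlam.
assert (Hne : forall x, Rmin u v <= x <= Rmax u v -> lam - x <> 0).
{ rewrite Rmin_left, Rmax_right by lra. intros x Hx; lra. }
apply (is_RInt_derive (fun x => c / (lam - x))); intros x Hx; specialize (Hne x Hx).
- auto_derive; [exact Hne | field; exact Hne].
- apply (ex_derive_continuous (V := R_NormedModule)).
  auto_derive. rewrite Rmult_1_r. now apply Rmult_integral_contrapositive.
Qed.

Lemma ex_RInt_reflect (f : R -> R) (c u v : R) :
  ex_RInt f u v -> ex_RInt (fun x => f (2 * c - x)) (2 * c - v) (2 * c - u).
Proof.
intros Hf. apply ex_RInt_swap.
assert (Hc := ex_RInt_comp_lin f (-1) (2 * c) (2 * c - u) (2 * c - v)).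
replace (-1 * (2 * c - u) + 2 * c) with u in Hc by ring.
replace (-1 * (2 * c - v) + 2 * c) with v in Hc by ring.
specialize (Hc Hf). apply ex_RInt_opp in Hc.
eapply ex_RInt_ext; [| exact Hc].
intros x _. cbv beta. unfold opp, scal; simpl. unfold mult; simpl.
replace (-1 * x + 2 * c) with (2 * c - x) by ring. ring.
Qed.

Lemma RInt_reflect (f : R -> R) (c u v : R) :
  ex_RInt f u v -> RInt f u v = RInt (fun x => f (2 * c - x)) (2 * c - v) (2 * c - u).
Proof.
intros Hf.
assert (Hg := ex_RInt_swap _ _ _ (ex_RInt_reflect f c u v Hf)).
assert (Hc := RInt_comp_lin f (-1) (2 * c) (2 * c - u) (2 * c - v)).
replace (-1 * (2 * c - u) + 2 * c) with u in Hc by ring.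
replace (-1 * (2 * c - v) + 2 * c) with v in Hc by ring.
rewrite <- (Hc Hf), <- (opp_RInt_swap _ _ _ Hg), <- (RInt_opp _ _ _ Hg).
apply RInt_ext. intros x _. unfold opp, scal; simpl. unfold mult; simpl.
replace (-1 * x + 2 * c) with (2 * c - x) by ring. ring.
Qed.

Section PoleIntegral.

Variables (G : R -> R) (lam : R).

Let F x := G x / (lam - x) ^ 2.

Lemma RInt_pole_near (d e s : R) :
  0 < s < d -> (forall x, lam - d < x < lam - s -> Rabs (G x - G lam) <= e) ->
  ex_RInt F (lam - d) (lam - s) ->
  Rabs (s * RInt F (lam - d) (lam - s) - G lam * (1 - s / d)) <= e * (1 - s / d).
Proof.
intros Hs HG Hex.
assert (Hint : forall c, is_RInt (fun x => c / (lam - x) ^ 2) (lam - d) (lam - s)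
                           (c * (1 - s / d) / s)).
{ intro c. replace (c * (1 - s / d) / s) with (c / (lam - (lam - s)) - c / (lam - (lam - d)))
    by (field; lra).
  apply is_RInt_inv_sq; lra. }
assert (HF : forall x, lam - d < x < lam - s ->
               (G lam - e) / (lam - x) ^ 2 <= F x <= (G lam + e) / (lam - x) ^ 2).
{ intros x Hx. specialize (HG x Hx). apply Rabs_le_between' in HG.
  assert (Hx2 : 0 < / (lam - x) ^ 2) by (apply Rinv_0_lt_compat, pow_lt; lra).
  unfold F, Rdiv. split; apply Rmult_le_compat_r; lra. }
assert (Hlo : (G lam - e) * (1 - s / d) / s <= RInt F (lam - d) (lam - s)).
{ rewrite <- (is_RInt_unique _ _ _ _ (Hint (G lam - e))).
  apply RInt_le; [lra | eexists; apply Hint | exact Hex | apply HF]. }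
assert (Hhi : RInt F (lam - d) (lam - s) <= (G lam + e) * (1 - s / d) / s).
{ rewrite <- (is_RInt_unique _ _ _ _ (Hint (G lam + e))).
  apply RInt_le; [lra | exact Hex | eexists; apply Hint | apply HF]. }
apply (Rmult_le_compat_l s) in Hlo, Hhi; try lra.
replace (s * ((G lam - e) * (1 - s / d) / s)) with ((G lam - e) * (1 - s / d)) in Hlo
  by (field; lra).
replace (s * ((G lam + e) * (1 - s / d) / s)) with ((G lam + e) * (1 - s / d)) in Hhi
  by (field; lra).
apply Rabs_le_between'. lra.
Qed.

Lemma RInt_pole_left_bound (A d e s : R) :
  0 < s < d -> A <= lam - d ->
  (forall x, lam - d < x < lam -> Rabs (G x - G lam) <= e) ->
  ex_RInt F A (lam - s) ->
  Rabs (s * RInt F A (lam - s) - G lam)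
    <= e + s * (Rabs (RInt F A (lam - d)) + Rabs (G lam) / d).
Proof.
intros Hs Hd HG Hex.
assert (HexK : ex_RInt F A (lam - d))
  by (apply (ex_RInt_Chasles_1 F _ _ (lam - s)); [lra | exact Hex]).
assert (HexJ : ex_RInt F (lam - d) (lam - s))
  by (apply (ex_RInt_Chasles_2 F A); [lra | exact Hex]).
assert (Hnear := RInt_pole_near d e s Hs (fun x Hx => HG x ltac:(lra)) HexJ).
assert (He : 0 <= e) by (eapply Rle_trans; [apply Rabs_pos | apply (HG (lam - s / 2)); lra]).
assert (Hsd : 0 < s / d < 1).
{ split; [apply Rdiv_lt_0_compat; lra|].
  apply (Rmult_lt_reg_r d); [lra|]. unfold Rdiv; rewrite Rmult_assoc, Rinv_l; lra. }
rewrite <- (RInt_Chasles F A (lam - d) (lam - s) HexK HexJ).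
set (K := RInt F A (lam - d)) in *; set (J := RInt F (lam - d) (lam - s)) in *.
change (plus K J) with (K + J).
replace (s * (K + J) - G lam) with (s * K + (s * J - G lam * (1 - s / d)) - G lam * (s / d))
  by ring.
assert (HsK : Rabs (s * K) = s * Rabs K) by (rewrite Rabs_mult, Rabs_pos_eq by lra; ring).
assert (Hgt : Rabs (G lam * (s / d)) = s * (Rabs (G lam) / d))
  by (rewrite Rabs_mult, (Rabs_pos_eq (s / d)) by lra; unfold Rdiv; ring).
assert (Het : 0 <= e * (s / d)) by (apply Rmult_le_pos; lra).
eapply Rle_trans; [apply Rabs_triang|]. rewrite Rabs_Ropp, Hgt.
eapply Rle_trans; [apply Rplus_le_compat_r, Rabs_triang|]. rewrite HsK.
replace (e * (1 - s / d)) with (e - e * (s / d)) in Hnear by ring.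
rewrite Rmult_plus_distr_l. lra.
Qed.

Lemma is_lim_seq_pole_left (A : R) (s : nat -> R) :
  A < lam -> continuity_pt G lam ->
  (forall n, 0 < s n) -> is_lim_seq s 0 ->
  (forall n, ex_RInt F A (lam - s n)) ->
  is_lim_seq (fun n => s n * RInt F A (lam - s n)) (G lam).
Proof.
intros HA HG Hs Hs0 Hex. apply is_lim_seq_spec. intros eps.
destruct (proj1 (continuity_pt_locally G lam) HG (pos_div_2 eps)) as [d0 Hd0].
set (d := Rmin d0 (lam - A)).
assert (Hd : 0 < d) by (apply Rmin_glb_lt; [apply cond_pos | lra]).
assert (Hdd0 := Rmin_l d0 (lam - A)); assert (HdA := Rmin_r d0 (lam - A)); fold d in Hdd0, HdA.
set (M := Rabs (RInt F A (lam - d)) + Rabs (G lam) / d).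
assert (HsM := is_lim_seq_mult' s (fun _ => M) 0 M Hs0 (is_lim_seq_const M)).
rewrite Rmult_0_l in HsM.
apply is_lim_seq_spec in Hs0, HsM.
eapply filter_imp; [| exact (filter_and _ _ (Hs0 (mkposreal d Hd)) (HsM (pos_div_2 eps)))].
intros n [Hsd HsMn]. simpl in Hsd, HsMn.
rewrite Rminus_0_r in Hsd, HsMn. apply Rabs_lt_between in Hsd. apply Rabs_lt_between in HsMn.
eapply Rle_lt_trans.
- apply (RInt_pole_left_bound A d (eps / 2)); try split; auto; try lra.
  intros x Hx. apply Rlt_le, Hd0.
  change (Rabs (x - lam) < d0). apply Rabs_lt_between'; lra.
- fold M. lra.
Qed.

End PoleIntegral.

Lemma is_lim_seq_pole_right (G : R -> R) (lam A : R) (s : nat -> R) :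
  lam < A -> continuity_pt G lam ->
  (forall n, 0 < s n) -> is_lim_seq s 0 ->
  (forall n, ex_RInt (fun x => G x / (lam - x) ^ 2) (lam + s n) A) ->
  is_lim_seq (fun n => s n * RInt (fun x => G x / (lam - x) ^ 2) (lam + s n) A) (G lam).
Proof.
intros HA HG Hs Hs0 Hex.
(* The reflection x |-> 2 lam - x turns the right-hand case into the left-hand one. *)
set (H x := G (2 * lam - x)).
assert (HH : continuity_pt H lam).
{ apply (continuity_pt_comp (fun x => 2 * lam - x) G).
  - apply continuity_pt_minus; [apply continuity_pt_const; intros ? ? | apply continuity_pt_id];
      reflexivity.
  - now replace (2 * lam - lam) with lam by ring. }
assert (Hreflect : forall n, RInt (fun x => G x / (lam - x) ^ 2) (lam + s n) A
                      = RInt (fun x => H x / (lam - x) ^ 2) (2 * lam - A) (lam - s n)).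
{ intro n. rewrite (RInt_reflect _ lam _ _ (Hex n)).
  replace (2 * lam - (lam + s n)) with (lam - s n) by ring.
  apply RInt_ext. intros x _. unfold H. f_equal. ring. }
replace (G lam) with (H lam) by (unfold H; f_equal; ring).
apply (is_lim_seq_ext
  (fun n => s n * RInt (fun x => H x / (lam - x) ^ 2) (2 * lam - A) (lam - s n))).
{ intro n. now rewrite Hreflect. }
apply is_lim_seq_pole_left; auto; [lra|].
intro n. assert (Hr := ex_RInt_reflect _ lam _ _ (Hex n)).
replace (2 * lam - (lam + s n)) with (lam - s n) in Hr by ring.
eapply ex_RInt_ext; [|exact Hr]. intros x _. unfold H. f_equal. ring.
Qed.

Lemma RiemannInt_f_lam_mul (lam u v I : R) (rho : R -> R) :
  (exists pr : Riemann_integrable (fun x => f_lam lam x * rho x) u v, RiemannInt pr = I) ->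
  ex_RInt (fun x => lam * x * rho x / (lam - x) ^ 2) u v
  /\ RInt (fun x => lam * x * rho x / (lam - x) ^ 2) u v = I.
Proof.
intros [pr Hpr].
assert (Hf : forall x, f_lam lam x * rho x = lam * x * rho x / (lam - x) ^ 2)
  by (intro x; unfold f_lam, Rdiv; ring).
split.
- eapply ex_RInt_ext; [intros x _; apply Hf | exact (ex_RInt_Reals_1 _ _ _ pr)].
- rewrite <- Hpr, <- RInt_Reals. apply RInt_ext. intros x _. symmetry. apply Hf.
Qed.

Lemma continuity_pt_scaled_id_mult (f : R -> R) (c x : R) :
  continuity_pt f x -> continuity_pt (fun y => c * y * f y) x.
Proof.
intros Hf. apply (continuity_pt_mult (fun y => c * y) f); [|exact Hf].
apply (continuity_pt_mult (fun _ => c) id);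
  [apply continuity_pt_const; intros ? ?; reflexivity | apply continuity_pt_id].
Qed.

Lemma is_lim_seq_gap_integral_left (rho : R -> R) (lam A : R) (s I : nat -> R) :
  A < lam -> continuity_pt rho lam -> (forall n, 0 < s n) -> is_lim_seq s 0 ->
  (forall n, exists pr : Riemann_integrable (fun x => f_lam lam x * rho x) A (lam - s n),
     RiemannInt pr = I n) ->
  is_lim_seq (fun n => s n * I n - lam ^ 2 * rho lam) 0.
Proof.
intros HA Hrho Hs Hs0 HI.
replace (Finite 0) with (Finite (lam * lam * rho lam - lam ^ 2 * rho lam)) by (f_equal; ring).
apply is_lim_seq_minus'; [|apply is_lim_seq_const].
apply (is_lim_seq_ext
  (fun n => s n * RInt (fun x => lam * x * rho x / (lam - x) ^ 2) A (lam - s n))).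
{ intro n. f_equal. apply (RiemannInt_f_lam_mul _ _ _ _ _ (HI n)). }
apply (is_lim_seq_pole_left (fun x => lam * x * rho x)); auto.
- now apply continuity_pt_scaled_id_mult.
- intro n. apply (RiemannInt_f_lam_mul _ _ _ _ _ (HI n)).
Qed.

Lemma is_lim_seq_gap_integral_right (rho : R -> R) (lam A : R) (s I : nat -> R) :
  lam < A -> continuity_pt rho lam -> (forall n, 0 < s n) -> is_lim_seq s 0 ->
  (forall n, exists pr : Riemann_integrable (fun x => f_lam lam x * rho x) (lam + s n) A,
     RiemannInt pr = I n) ->
  is_lim_seq (fun n => s n * I n - lam ^ 2 * rho lam) 0.
Proof.
intros HA Hrho Hs Hs0 HI.
replace (Finite 0) with (Finite (lam * lam * rho lam - lam ^ 2 * rho lam)) by (f_equal; ring).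
apply is_lim_seq_minus'; [|apply is_lim_seq_const].
apply (is_lim_seq_ext
  (fun n => s n * RInt (fun x => lam * x * rho x / (lam - x) ^ 2) (lam + s n) A)).
{ intro n. f_equal. apply (RiemannInt_f_lam_mul _ _ _ _ _ (HI n)). }
apply (is_lim_seq_pole_right (fun x => lam * x * rho x)); auto.
- now apply continuity_pt_scaled_id_mult.
- intro n. apply (RiemannInt_f_lam_mul _ _ _ _ _ (HI n)).
Qed.

Lemma is_lim_seq_hhat_error_terms (P sm sp EL ER XL XR : nat -> R) (lam a : R) :
  0 < a -> is_lim_seq (fun n => / P n) 0 ->
  (forall n, a <= P n * sm n) -> (forall n, a <= P n * sp n) ->
  is_lim_seq EL 0 -> is_lim_seq ER 0 -> is_lim_seq XL 0 -> is_lim_seq XR 0 ->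
  is_lim_seq (fun n => EL n + ER n + XL n * / (sm n * P n) + XR n * / (sp n * P n)
                       + lam / P n * / (sp n * P n) - lam / P n * / (sm n * P n)) 0.
Proof.
intros Ha HP Hsm Hsp HEL HER HXL HXR.
assert (HlamP : is_lim_seq (fun n => lam / P n) 0).
{ replace (Finite 0) with (Rbar_mult lam 0) by (simpl; f_equal; ring).
  exact (is_lim_seq_scal_l _ lam 0 HP). }
replace (Finite 0) with (Finite (0 + 0 + 0 + 0 + 0 - 0)) by (f_equal; ring).
apply is_lim_seq_minus'; [repeat apply is_lim_seq_plus'|]; auto;
  now apply (is_lim_seq_div_scaled_gap _ P _ a).
Qed.

Theorem mainTheorem1
  (rho : R -> R) (alpha beta lam : R)
  (Halpha : 0 <= alpha) (Hab : alpha < beta)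
  (Hnonneg : forall x, 0 <= rho x)
  (Hsupp : forall x, (x < alpha \/ beta < x) -> rho x = 0)
  (Hmass : exists pr : Riemann_integrable rho alpha beta, RiemannInt pr = 1)
  (Hcont : forall x, alpha <= x <= beta ->
             limit1_in rho (fun y => alpha <= y <= beta) (rho x) x)
  (Hbdd : exists M, forall x, Rabs (rho x) <= M)
  (Hlam : alpha < lam < beta) (Hrholam : 0 < rho lam)
  (HC1 : exists delta, 0 < delta /\ exists rho' : R -> R,
           (forall x, Rabs (x - lam) < delta -> derivable_pt_lim rho x (rho' x)) /\
           (forall x, Rabs (x - lam) < delta -> continuity_pt rho' x))
  (p : nat -> nat) (Hppos : forall n, (0 < p n)%nat)
  (Hpinf : forall M : nat, exists N, forall n, (N <= n)%nat -> (M <= p n)%nat)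
  (ev : nat -> nat -> R)
  (Hevpos : forall n, 0 < ev n 1%nat)
  (Hevinc : forall n j, (1 <= j)%nat -> (j < p n)%nat -> ev n j < ev n (S j))
  (i : nat -> nat)
  (Hi : forall n, (2 <= i n)%nat /\ (i n <= p n - 1)%nat)
  (Hevi : forall n, ev n (i n) = lam)
  (a b : R) (Ha : 0 < a) (Hab' : a < b)
  (Hgap : forall n,
     a <= INR (p n) * (ev n (i n) - ev n (pred (i n))) <= b /\
     a <= INR (p n) * (ev n (S (i n)) - ev n (i n)) <= b)
  (Hii : exists IL IR : nat -> R,
     (forall n, exists pr : Riemann_integrable (fun x => f_lam lam x * rho x)
                              alpha (lam - (ev n (i n) - ev n (pred (i n)))),
                  RiemannInt pr = IL n) /\
     (forall n, exists pr : Riemann_integrable (fun x => f_lam lam x * rho x)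
                              (lam + (ev n (S (i n)) - ev n (i n))) beta,
                  RiemannInt pr = IR n) /\
     Un_cv (fun n => (/ INR (p n) * sumR 1 (i n - 2) (fun j => f_lam lam (ev n j))
                        - IL n) / INR (p n)) 0 /\
     Un_cv (fun n => (/ INR (p n) * sumR (i n + 2) (p n) (fun j => f_lam lam (ev n j))
                        - IR n) / INR (p n)) 0) :
  let hh := fun n => h_i (p n) (i n) (ev n) in
  let hhat := fun n => hhat_i (p n) lam (rho lam)
                 (ev n (i n) - ev n (pred (i n))) (ev n (S (i n)) - ev n (i n)) in
  Un_cv (fun n => (hh n - hhat n) / INR (p n) ^ 2) 0 /\
  (exists c C, 0 < c /\ 0 < C /\
     forall n, c * INR (p n) ^ 2 <= hhat n <= C * INR (p n) ^ 2) /\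
  Un_cv (fun n => hh n / hhat n) 1.
Proof.
intros hh hhat.
destruct Hii as [IL [IR [HIL [HIR [HTL HTR]]]]].
set (P n := INR (p n)).
set (sm n := ev n (i n) - ev n (pred (i n))).
set (sp n := ev n (S (i n)) - ev n (i n)).
assert (HP : forall n, 0 < P n) by (intro n; apply lt_0_INR, Hppos).
assert (HinvP : is_lim_seq (fun n => / P n) 0) by exact (is_lim_seq_inv_INR p Hpinf).
assert (Hgm : forall n, a <= P n * sm n <= b) by (intro n; apply Hgap).
assert (Hgp : forall n, a <= P n * sp n <= b) by (intro n; apply Hgap).
assert (Hsm : forall n, 0 < sm n) by (intro n; specialize (Hgm n); specialize (HP n); nra).
assert (Hsp : forall n, 0 < sp n) by (intro n; specialize (Hgp n); specialize (HP n); nra).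
assert (Hrho : continuity_pt rho lam).
{ destruct HC1 as [delta [Hdelta [rho' [Hder _]]]].
  apply derivable_continuous_pt. exists (rho' lam). apply Hder.
  now rewrite Rminus_eq_0, Rabs_R0. }
assert (Part1 : is_lim_seq (fun n => (hh n - hhat n) / INR (p n) ^ 2) 0).
{ eapply is_lim_seq_ext.
  { intro n. symmetry. destruct (Hi n). specialize (Hppos n).
    assert (Epred : ev n (pred (i n)) = lam - sm n) by (unfold sm; rewrite Hevi; ring).
    assert (Esucc : ev n (S (i n)) = lam + sp n) by (unfold sp; rewrite Hevi; ring).
    change (hhat n) with (hhat_i (p n) lam (rho lam) (sm n) (sp n)).
    unfold hh. rewrite h_i_decomposition, Hevi, Epred, Esucc by lia.
    erewrite (hhat_i_error _ _ _ _ _ _ _ (IL n) (IR n)) by auto. reflexivity. }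
  apply (is_lim_seq_hhat_error_terms P sm sp _ _ _ _ lam a Ha HinvP).
  - intro n. apply Hgm.
  - intro n. apply Hgp.
  - now apply is_lim_seq_Reals.
  - now apply is_lim_seq_Reals.
  - apply (is_lim_seq_gap_integral_left rho lam alpha sm IL); auto; [lra|].
    exact (is_lim_seq_scaled_gap P sm a b Ha HinvP HP Hgm).
  - apply (is_lim_seq_gap_integral_right rho lam beta sp IR); auto; [lra|].
    exact (is_lim_seq_scaled_gap P sp a b Ha HinvP HP Hgp). }
destruct (hhat_i_order p sm sp lam (rho lam) a b) as [c [C [Hc [HC Hbounds]]]]; auto; try lra.
split; [now apply is_lim_seq_Reals|]. split; [now exists c, C|].
apply is_lim_seq_Reals, (is_lim_seq_ratio_one _ _ (fun n => INR (p n) ^ 2) c); auto.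
- intro n. apply pow_lt, HP.
- intro n. apply Hbounds.
Qed.
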